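(* Let $\mathbb{K}$ be a field, $n\ge3$ (so that $\mathbb{D}_n$ is defined), and $\alpha_1,\dots,\alpha_n\in\mathbb{K}^*$. If $n$ is even, then $X_{\mathbb{D}_n}(\alpha_1,\dots,\alpha_n)\simeq X_{\mathbb{D}_n}(\alpha,\beta,1,\dots,1)$ for some $\alpha,\beta\in\mathbb{K}^*$ depending on the $\alpha_i$. If $n$ is odd, then $X_{\mathbb{D}_n}(\alpha_1,\dots,\alpha_n)\simeq X_{\mathbb{D}_n}(\alpha,1,\dots,1)$ for some $\alpha\in\mathbb{K}^*$ depending on the $\alpha_i$.
   Context: $X_{\mathbb{D}_n}(\alpha_1,\dots,\alpha_n)$ is the affine variety over $\mathbb{K}$ in variables $x_1,\dots,x_n,x'_1,\dots,x'_n$ defined by $x_1x'_1=1+\alpha_1x_3$, $x_2x'_2=1+\alpha_2x_3$, $x_3x'_3=1+\alpha_3x_1x_2x_4$, $x_ix'_i=1+\alpha_ix_{i-1}x_{i+1}$ for $4\le i\le n-1$, $x_nx'_n=1+\alpha_nx_{n-1}$ (with the obvious modifications for $n=3$, where $x_3x'_3=1+\alpha_3x_1x_2$). It corresponds to the tree $\mathbb{D}_n$: vertices $1,2$ are leaves attached to vertex $3$, and $3,4,\dots,n$ form a path. *)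

From HB Require Import structures.
From mathcomp Require Import all_boot all_order all_algebra.
From mathcomp Require Import mpoly.
Set Implicit Arguments. Unset Strict Implicit. Unset Printing Implicit Defensive.
Import Order.TTheory GRing.Theory.
Local Open Scope ring_scope.

(* Polynomial ring in 2n variables: x_k = variable k, x'_k = variable n+k,
   for 0 <= k < n (0-based: paper's x_{k+1} is our x_k). *)
Section XD.
Variables (K : fieldType) (n : nat).

Definition PR := {mpoly K[n + n]}.

(* variable with nat index k (0 if k >= 2n; never used out of range) *)
Definition Xv (k : nat) : {mpoly K[n + n]} :=
  oapp (fun j : 'I_(n + n) => 'X_j) 0 (insub k).

(* right-hand monomial of the exchange relation at (0-based) vertex i
   of the tree D_n: vertices 0,1 are leaves at 2; 2,3,...,n-1 is a path. *)
Definition Dmon (i : nat) : {mpoly K[n + n]} :=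
  if (i < 2)%N then Xv 2
  else if i == 2%N then Xv 0 * Xv 1 * (if (3 < n)%N then Xv 3 else 1)
  else if (i.+1 < n)%N then Xv i.-1 * Xv i.+1
  else Xv i.-1.

Definition Dgen (a : 'I_n -> K) (i : 'I_n) : {mpoly K[n + n]} :=
  Xv i * Xv (n + i) - (1 + a i *: Dmon i).

Definition inDideal (a : 'I_n -> K) (p : {mpoly K[n + n]}) : Prop :=
  exists c : 'I_n -> {mpoly K[n + n]}, p = \sum_(i < n) c i * Dgen a i.

(* X_{D_n}(a) ~= X_{D_n}(b): K-algebra isomorphism of the coordinate rings
   K[x,x']/I_a and K[x,x']/I_b, given by polynomial substitutions phi
   (A_a -> A_b, x_j |-> phi_j) and psi (A_b -> A_a), well defined and
   mutually inverse modulo the ideals. *)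
Definition XD_iso (a b : 'I_n -> K) : Prop :=
  exists (phi psi : (n + n).-tuple {mpoly K[n + n]}),
    [/\ forall i, inDideal b (comp_mpoly phi (Dgen a i)),
        forall i, inDideal a (comp_mpoly psi (Dgen b i)),
        forall j, inDideal a (comp_mpoly psi (tnth phi j) - 'X_j)
      & forall j, inDideal b (comp_mpoly phi (tnth psi j) - 'X_j)].
End XD.

(* Rescaling [x_k -> l_k x_k], [x'_k -> l_k^-1 x'_k] maps X(a) isomorphically
   onto X(b) with [b_i = a_i * prod_(j ~ i) l_j].  Solving [b_i = 1] for the
   vertices [i >= 2] of the path part of D_n: the relation at [i = n-1] fixes
   [l_(n-2)], and [l_(k-1) l_(k+1) a_k = 1] propagates down the path in steps
   of two, leaving the other parity class free; [l_0] absorbs the relation at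
   the branch vertex.  When n is odd the free class contains [l_2], so one may
   also impose [b_1 = a_1 l_2 = 1] and propagate upwards along it. *)

From HB Require Import structures.
From mathcomp Require Import all_boot all_order all_algebra.
From mathcomp Require Import mpoly zify ring.
Set Implicit Arguments. Unset Strict Implicit. Unset Printing Implicit Defensive.
Import GRing.Theory.
Local Open Scope ring_scope.

Section Rescaling.
Variables (K : fieldType) (n : nat) (hn : (3 <= n)%N).

Definition rescale_coef (l : nat -> K) (k : nat) : K :=
  if (k < n)%N then l k else (l (k - n)%N)^-1.

Definition rescale (l : nat -> K) : (n + n).-tuple {mpoly K[n + n]} :=
  [tuple rescale_coef l j *: 'X_j | j < n + n].

Definition Dweight (l : nat -> K) (i : nat) : K :=
  if (i < 2)%N then l 2%N
  else if i == 2%N then l 0%N * l 1%N * (if (3 < n)%N then l 3%N else 1)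
  else if (i.+1 < n)%N then l i.-1 * l i.+1
  else l i.-1.

Lemma comp_rescale_Xv l k : (k < n + n)%N ->
  comp_mpoly (rescale l) (Xv K n k) = rescale_coef l k *: Xv K n k.
Proof. by move=> hk; rewrite /Xv insubT /= comp_mpolyXU -tnth_nth tnth_mktuple. Qed.

Lemma comp_rescale_Dmon l i : (i < n)%N ->
  comp_mpoly (rescale l) (Dmon K n i) = Dweight l i *: Dmon K n i.
Proof.
move=> hi; have coefE k : (k < n)%N -> rescale_coef l k = l k.
  by rewrite /rescale_coef => ->.
have scM (c d : K) (p q : {mpoly K[n + n]}) : c *: p * (d *: q) = (c * d) *: (p * q).
  by rewrite -scalerAl -scalerAr scalerA.
rewrite /Dmon /Dweight.
case: ifP => [i2|_]; first by rewrite comp_rescale_Xv ?coefE //; lia.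
case: ifP => [/eqP i2|_].
  rewrite !rmorphM /= !comp_rescale_Xv ?coefE ?scM //; try lia.
  by case: ifP => h3; rewrite ?comp_mpoly1 ?mulr1 // comp_rescale_Xv ?coefE ?scM //; lia.
case: ifP => h; last by rewrite comp_rescale_Xv ?coefE //; lia.
by rewrite rmorphM /= !comp_rescale_Xv ?coefE ?scM //; lia.
Qed.

Lemma comp_rescale_Dgen l (a b : 'I_n -> K) (l_nz : forall k, l k != 0)
  (hb : forall i : 'I_n, b i = a i * Dweight l i) i :
  comp_mpoly (rescale l) (Dgen a i) = Dgen b i.
Proof.
have hi := ltn_ord i.
rewrite /Dgen rmorphB rmorphD rmorphM /= comp_mpoly1 comp_mpolyZ comp_rescale_Dmon //.
rewrite !comp_rescale_Xv; try lia.
rewrite -scalerAl -scalerAr scalerA /rescale_coef hi ifF; last by lia.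
by rewrite addKn mulfV ?l_nz // scale1r scalerA hb.
Qed.

Lemma Dweight_inv l (l_nz : forall k, l k != 0) i :
  Dweight l i * Dweight (fun k => (l k)^-1) i = 1.
Proof.
rewrite /Dweight; case: ifP => _; first by rewrite mulfV.
case: ifP => _; first by case: ifP => _; field; rewrite !l_nz.
by case: ifP => _; field; rewrite ?l_nz.
Qed.

Lemma inDideal_Dgen (a : 'I_n -> K) i : inDideal a (Dgen a i).
Proof.
exists (fun j => if j == i then 1 else 0).
rewrite (bigD1 i) //= eqxx mul1r big1 ?addr0 // => j /negbTE ->; exact: mul0r.
Qed.

Lemma inDideal0 (a : 'I_n -> K) : inDideal a 0.
Proof. by exists (fun _ => 0); rewrite big1 // => j _; rewrite mul0r. Qed.

Lemma XD_iso_rescale l (a b : 'I_n -> K) (l_nz : forall k, l k != 0)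
  (hb : forall i : 'I_n, b i = a i * Dweight l i) : XD_iso a b.
Proof.
set l' := fun k => (l k)^-1.
have l'_nz k : l' k != 0 by rewrite invr_eq0.
have hb' i : a i = b i * Dweight l' i by rewrite hb -mulrA Dweight_inv // mulr1.
have comp_inv (u v : nat -> K) : (forall k, u k * v k = 1) ->
    forall j, comp_mpoly (rescale u) (tnth (rescale v) j) = 'X_j.
  move=> uv j; rewrite tnth_mktuple comp_mpolyZ comp_mpolyXU -tnth_nth tnth_mktuple.
  rewrite scalerA mulrC /rescale_coef.
  by case: ifP => _; rewrite ?uv ?scale1r // -invfM uv invr1 scale1r.
exists (rescale l), (rescale l'); split=> [i|i|j|j].
- by rewrite (comp_rescale_Dgen l_nz hb); apply: inDideal_Dgen.
- by rewrite (comp_rescale_Dgen l'_nz hb'); apply: inDideal_Dgen.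
- by rewrite comp_inv ?subrr => [|k]; [apply: inDideal0 | rewrite mulVf].
- by rewrite comp_inv ?subrr => [|k]; [apply: inDideal0 | rewrite mulfV].
Qed.

End Rescaling.

Section Gauge.
Variables (K : fieldType) (n : nat) (hn : (3 <= n)%N) (a : 'I_n -> K)
  (a_nz : forall i, a i != 0).

Definition anat (k : nat) : K := oapp a 1 (insub k).

Lemma anat_val (i : 'I_n) : anat (val i) = a i.
Proof. by rewrite /anat valK. Qed.

Lemma anat_nz k : anat k != 0.
Proof. by rewrite /anat; case: insub => [i|] /=; rewrite ?a_nz ?oner_eq0. Qed.

(* [tail_scale d] is the scale of the vertex [n - d], determined from the end
   of the path; the value [1] at [d = 0, 1] starts both parity classes. *)
Fixpoint tail_scale (d : nat) : K :=
  if d is d'.+2 then (anat (n - d' - 1) * tail_scale d')^-1 else 1.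

(* [head_scale m] is the scale of the vertex [m.*2 + 2], determined from
   [a_1 l_2 = 1] upwards. *)
Fixpoint head_scale (m : nat) : K :=
  if m is m'.+1 then (anat (m'.*2 + 3) * head_scale m')^-1 else (anat 1)^-1.

Lemma tail_scale_nz d : tail_scale d != 0.
Proof.
suff: tail_scale d != 0 /\ tail_scale d.+1 != 0 by case.
elim: d => [|d [IH1 IH2]]; first by rewrite oner_eq0.
by split => //=; rewrite invr_eq0 mulf_neq0 ?anat_nz.
Qed.

Lemma head_scale_nz m : head_scale m != 0.
Proof. by elim: m => [|m IH] /=; rewrite invr_eq0 ?mulf_neq0 ?anat_nz. Qed.

Lemma tail_scale_rel k : (0 < k < n)%N ->
  anat k * tail_scale (n - k.-1) * tail_scale (n - k.+1) = 1.
Proof.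
move=> hk; have -> : (n - k.-1 = (n - k.+1).+2)%N by lia.
rewrite /=; have -> : (n - (n - k.+1) - 1 = k)%N by lia.
by rewrite mulrAC mulfV // mulf_neq0 ?anat_nz ?tail_scale_nz.
Qed.

Section Solution.
Variables (s : nat -> K) (s_nz : forall k, s k != 0) (s_end : s n = 1)
  (s_rel : forall k, (3 <= k < n)%N -> anat k * s k.-1 * s k.+1 = 1).

Definition gauge (k : nat) : K :=
  if k == 0%N then (anat 2 * s 3)^-1 else if k == 1%N then 1 else s k.

Lemma gauge_nz k : gauge k != 0.
Proof.
rewrite /gauge; case: ifP => _; first by rewrite invr_eq0 mulf_neq0 ?anat_nz.
by case: ifP => _; rewrite ?oner_eq0.
Qed.

Lemma anat_Dweight_gauge k : (k < n)%N ->
  anat k * Dweight n gauge k = if (k < 2)%N then anat k * s 2 else 1.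
Proof.
move=> hk; rewrite /Dweight; case: ifP => // k2.
have gauge3 : (if (3 < n)%N then gauge 3 else 1) = s 3.
  case: ifP => // h3; have n3 : n = 3%N by lia.
  by rewrite -n3 s_end.
case: ifP => [/eqP -> | k_ne2].
  by rewrite gauge3 /gauge /= mulr1 mulrCA mulVf // mulf_neq0 ?anat_nz.
have k3 : (3 <= k)%N by lia.
have gaugeE j : (2 <= j)%N -> gauge j = s j by case: j => [|[|j]].
rewrite !gaugeE; try lia.
case: ifP => kn; first by rewrite mulrA s_rel //; lia.
have kn1 : k.+1 = n by lia.
by move: (@s_rel k); rewrite kn1 s_end mulr1; apply; lia.
Qed.

Lemma XD_iso_gauge (b : 'I_n -> K) :
  (forall i : 'I_n, b i = if (val i < 2)%N then anat (val i) * s 2 else 1) ->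
  XD_iso a b.
Proof.
move=> hb; apply: (XD_iso_rescale hn gauge_nz) => i.
by rewrite hb -anat_val (anat_Dweight_gauge (ltn_ord i)).
Qed.

End Solution.

Definition scale_even (k : nat) : K := tail_scale (n - k).

Lemma scale_even_nz k : scale_even k != 0.
Proof. exact: tail_scale_nz. Qed.

Lemma scale_even_end : scale_even n = 1.
Proof. by rewrite /scale_even subnn. Qed.

Lemma scale_even_rel k :
  (3 <= k < n)%N -> anat k * scale_even k.-1 * scale_even k.+1 = 1.
Proof. by move=> hk; apply: tail_scale_rel; lia. Qed.

Definition scale_odd (k : nat) : K :=
  if odd k then tail_scale (n - k) else head_scale (k./2).-1.

Lemma scale_odd_nz k : scale_odd k != 0.
Proof. by rewrite /scale_odd; case: ifP; rewrite ?tail_scale_nz ?head_scale_nz. Qed.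

Lemma scale_odd_end : odd n -> scale_odd n = 1.
Proof. by rewrite /scale_odd subnn => ->. Qed.

Lemma scale_odd_rel k :
  (3 <= k < n)%N -> anat k * scale_odd k.-1 * scale_odd k.+1 = 1.
Proof.
move=> hk; have [j kE] : exists j, k = j.+1 by exists k.-1; lia.
rewrite kE /scale_odd /= negbK; case: ifP => oj; first by apply: tail_scale_rel; lia.
have [m ->] : exists m, j = m.*2.+2.
  exists (j./2).-1; move: (odd_double_half j); rewrite oj add0n; lia.
by rewrite /= doubleK addn3 mulfV // mulf_neq0 ?anat_nz ?head_scale_nz.
Qed.

End Gauge.

Unset Implicit Arguments.

Theorem mainTheorem15 (K : fieldType) (n : nat) (hn : (3 <= n)%N)
  (a : 'I_n -> K) (ha : forall i, a i != 0) :
  (~~ odd n -> exists alpha beta : K, alpha != 0 /\ beta != 0 /\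
     XD_iso a (fun i : 'I_n => if val i == 0%N then alpha
                               else if val i == 1%N then beta else 1))
  /\
  (odd n -> exists alpha : K, alpha != 0 /\
     XD_iso a (fun i : 'I_n => if val i == 0%N then alpha else 1)).
Proof.
have nz := anat_nz ha; split=> [_ | n_odd].
- exists (anat a 0 * scale_even a 2), (anat a 1 * scale_even a 2).
  do 2?split; try by rewrite mulf_neq0 ?nz ?scale_even_nz.
  apply: (XD_iso_gauge hn ha (scale_even_nz ha) (scale_even_end a)
                       (scale_even_rel hn ha)).
  by case=> -[|[|i]] hi /=.
- exists (anat a 0 / anat a 1); split; first by rewrite mulf_neq0 ?invr_eq0 ?nz.
  apply: (XD_iso_gauge hn ha (scale_odd_nz ha) (scale_odd_end a n_odd)
                       (scale_odd_rel hn ha)).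
  by case=> -[|[|i]] hi /=; rewrite ?/scale_odd /= ?mulfV.
Qed.
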